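(* Fix a degree sequence $\mathbf d=(d_1,\dots,d_n)$ with $\ell_n=d_1+\dots+d_n$ even, and an increasing sequence $(g_l)_{l\in\mathbb{N}_0}$. For all distinct vertices $a,b\in[n]$ with $d_a\le g_0$, $d_b\le g_0$, and for all $\bar k\in\mathbb{N}$, $$\mathbb{P}\big(\mathrm{dist}_{\mathrm{CM}_n}(a,b)\le2\bar k\big)\le\frac{d_ad_b}{\ell_n}\sum_{k=1}^{2\bar k}\Big(1-\frac{2k}{\ell_n}\Big)^{-k}\prod_{l=1}^{k-1}\nu_n(g_l\wedge g_{k-l})+(d_a+d_b)\sum_{k=1}^{\bar k}\Big(1-\frac{2k}{\ell_n}\Big)^{-k}\big(1-F_n^*(g_k)\big)\prod_{l=1}^{k-1}\nu_n(g_l).$$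
   Context: $\mathrm{CM}_n$ is the configuration model: the random multigraph on $[n]$ obtained by attaching $d_i$ half-edges to vertex $i$ and pairing all half-edges uniformly at random; $\mathrm{dist}_{\mathrm{CM}_n}$ is graph distance. $a\wedge b=\min\{a,b\}$. Size-biased distribution function: $F_n^*(t)=\frac1{\ell_n}\sum_{v\in[n]}d_v\mathbf 1_{\{d_v\le t\}}$. Truncated mean: $\nu_n(t)=\frac1{\ell_n}\sum_{v\in[n]}d_v(d_v-1)\mathbf 1_{\{d_v\le t\}}$. *)

From mathcomp Require Import all_boot all_order all_fingroup all_algebra.
Set Implicit Arguments. Unset Strict Implicit. Unset Printing Implicit Defensive.
Import Order.TTheory GRing.Theory Num.Theory.
Local Open Scope ring_scope.

Section CM.
Variables (n : nat) (d : 'I_n -> nat).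

Definition half_edge : finType := {v : 'I_n & 'I_(d v)}.

Definition elln : nat := (\sum_(v < n) d v)%N.

(* a pairing of all half-edges = fixed-point-free involution *)
Definition is_pairing (p : {perm half_edge}) : bool :=
  [forall h, (p (p h) == h) && (p h != h)].

Definition pairings : {set {perm half_edge}} := [set p | is_pairing p].

Definition cm_adj (p : {perm half_edge}) : rel 'I_n :=
  fun u v => [exists h : half_edge, (tag h == u) && (tag (p h) == v)].

Definition cm_dist_le (p : {perm half_edge}) (a b : 'I_n) (m : nat) : bool :=
  [exists k : 'I_m.+1, [exists s : (nat_of_ord k).-tuple 'I_n,
      path (cm_adj p) a s && (last a s == b)]].

Definition cm_prob (R : numFieldType) (E : pred {perm half_edge}) : R :=
  (#|[set p in pairings | E p]|)%:R / (#|pairings|)%:R.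

Definition Fstar (R : realFieldType) (t : R) : R :=
  (\sum_(v < n | (d v)%:R <= t) (d v)%:R) / (elln)%:R.

Definition nun (R : realFieldType) (t : R) : R :=
  (\sum_(v < n | (d v)%:R <= t) ((d v) * (d v).-1)%:R) / (elln)%:R.

End CM.

From mathcomp Require Import all_boot all_order all_fingroup all_algebra.
From mathcomp Require Import ring zify.
Set Implicit Arguments. Unset Strict Implicit. Unset Printing Implicit Defensive.
Import Order.TTheory GRing.Theory Num.Theory.

(* Every path of length k <= 2 kbar from a to b either has its i-th vertex of degree at
   most g_i /\ g_(k-i), or contains, seen from a or from b, a first vertex at distance
   j <= kbar of degree larger than g_j. Either kind of path of length k is witnessed by
   k disjoint half-edge pairs: one half-edge at each end and two distinct half-edges at
   each interior vertex. A prescribed set of k disjoint pairs occurs in the uniform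
   pairing with probability at most (l_n - 2k)^-k: each pair costs a factor
   l_n - 2k + 1, seen by conjugating the pairing with a transposition. Summing over the
   half-edge choices turns each interior vertex into a factor nu_n and the last vertex
   into d_b, or into 1 - F_n^* when its degree is too large. *)

Lemma card_le_sum_cover (T I : finType) (A : {set T}) (E : pred T) (F : I -> pred T) :
  (forall x, x \in A -> E x -> exists i, F i x) ->
  (#|[set x in A | E x]| <= \sum_i #|[set x in A | F i x]|)%N.
Proof.
have card_cond (P : pred T) : #|[set x in A | P x]| = (\sum_(x in A) P x)%N.
  rewrite -sum1_card big_mkcond [RHS]big_mkcond /=; apply: eq_bigr => x _.
  by rewrite inE; case: (x \in A); case: (P x).
move=> cover; rewrite card_cond (eq_bigr _ (fun i _ => card_cond (F i))).
rewrite exchange_big /=; apply: leq_sum => x xA.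
case Ex: (E x) => //; have [i Fi] := cover x xA Ex.
by rewrite (bigD1 i) //= Fi.
Qed.

Section HalfEdges.
Variables (n : nat) (d : 'I_n -> nat).
Local Notation he := (half_edge d).

Lemma card_half_edges_at (v : 'I_n) : #|[pred h : he | tag h == v]| = d v.
Proof.
have E : [pred h : he | tag h == v] =i
    [set Tagged (fun v => 'I_(d v)) i | i in 'I_(d v)].
  move=> [w i]; rewrite inE /=; apply/idP/imsetP => [/eqP E|[j _ [E _]]].
    by move: i; rewrite E => i; exists i.
  by rewrite E.
rewrite (eq_card E) card_imset ?card_ord //.
by move=> i j H; exact: eq_from_Tagged H.
Qed.

Lemma sum_half_edges (F : 'I_n -> nat) :
  (\sum_(h : he) F (tag h) = \sum_v d v * F v)%N.
Proof.
rewrite (partition_big (fun h : he => tag h) predT) //=.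
apply: eq_bigr => v _.
rewrite (eq_bigr (fun _ => F v)); last by move=> h /eqP ->.
by rewrite sum_nat_const card_half_edges_at.
Qed.

Lemma card_half_edges_in (P : pred 'I_n) :
  #|[pred h : he | P (tag h)]| = (\sum_(v | P v) d v)%N.
Proof.
rewrite -sum1_card big_mkcond /=.
rewrite (eq_bigr (fun h : he => if P (tag h) then 1%N else 0%N)) //.
rewrite (sum_half_edges (fun v => if P v then 1%N else 0%N)) [RHS]big_mkcond /=.
by apply: eq_bigr => v _; case: (P v); rewrite ?muln0 ?muln1.
Qed.

Lemma card_half_edge : #|{: he}| = elln d.
Proof.
have := card_half_edges_in predT; rewrite /elln => <-.
by apply: eq_card.
Qed.

Lemma pairingP (p : {perm he}) :
  reflect (forall h, p (p h) = h /\ p h != h) (p \in pairings d).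
Proof.
rewrite inE /is_pairing; apply: (iffP forallP) => H h.
  by have /andP[/eqP -> ->] := H h.
by have [E1 E2] := H h; rewrite E1 eqxx E2.
Qed.

Lemma permJ_tperm (p : {perm he}) y z u :
  (p ^ tperm y z)%g u = tperm y z (p (tperm y z u)).
Proof. by rewrite -{1}(tpermK y z u) permJ. Qed.

Lemma pairing_conjg_tperm (p : {perm he}) y z :
  p \in pairings d -> (p ^ tperm y z)%g \in pairings d.
Proof.
move/pairingP => H; apply/pairingP => h; rewrite !permJ_tperm tpermK.
have [-> _] := H (tperm y z h); rewrite tpermK; split => //.
apply/negP => /eqP E.
have : p (tperm y z h) = tperm y z h by rewrite -{2}E tpermK.
by move/eqP; rewrite (negbTE (proj2 (H _))).
Qed.

Lemma cm_adj_sym (p : {perm he}) u v :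
  p \in pairings d -> cm_adj p u v -> cm_adj p v u.
Proof.
move=> /pairingP pP /existsP[h /andP[t1 t2]]; apply/existsP; exists (p h).
by rewrite (proj1 (pP h)) t1 t2.
Qed.

Definition matches (p : {perm he}) (L : seq (he * he)) :=
  all (fun e => p e.1 == e.2) L.

Definition endpoints (L : seq (he * he)) := flatten [seq [:: e.1; e.2] | e <- L].

Definition pairings_with (L : seq (he * he)) := [set p in pairings d | matches p L].

Lemma size_endpoints L : size (endpoints L) = (2 * size L)%N.
Proof. by elim: L => [|e L IH] //=; rewrite IH mulnS. Qed.

Lemma mem_endpoints L e : e \in L -> (e.1 \in endpoints L) && (e.2 \in endpoints L).
Proof.
move=> eL; apply/andP; split; apply/flattenP; exists [:: e.1; e.2];
  by [apply/mapP; exists e | rewrite !inE eqxx ?orbT].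
Qed.

Lemma card_free_half_edges x L :
  (elln d - (2 * size L).+1 <= #|[set z : he | (z != x) && (z \notin endpoints L)]|)%N.
Proof.
set Z := [set z | _].
have : (#|~: Z| <= (2 * size L).+1)%N.
  rewrite -(size_endpoints L) -[X in (_ <= X)%N]/(size (x :: endpoints L)).
  apply: leq_trans (card_size _); apply: subset_leq_card.
  apply/subsetP => h; rewrite !inE negb_and !negbK.
  by case/orP => ->; rewrite ?orbT.
have := cardsC Z; rewrite card_half_edge; lia.
Qed.

(* Conjugating by (y z) turns the pair (x, y) into (x, z) and fixes the pairs of L. *)
Lemma card_pairings_with_cons_le x y z L :
  x != y -> x \notin endpoints L -> y \notin endpoints L ->
  z != x -> z \notin endpoints L ->
  (#|pairings_with ((x, y) :: L)| <= #|[set p in pairings_with L | p x == z]|)%N.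
Proof.
move=> xy xL yL zx zL.
rewrite -(card_imset _ (@conjg_inj _ (tperm y z))).
apply: subset_leq_card; apply/subsetP => q /imsetP[p].
rewrite !inE /= => /andP[pP /andP[/eqP pxy pL]] ->.
have -> : is_pairing (p ^ tperm y z)%g.
  by move: (pairing_conjg_tperm y z (p := p)); rewrite !inE; apply.
rewrite /= permJ_tperm.
have yx : y != x by rewrite eq_sym.
rewrite (tpermD yx zx) pxy tpermL eqxx andbT.
apply/allP => e eL; rewrite permJ_tperm.
have off u : u \in endpoints L -> (y != u) && (z != u).
  by move=> uL; apply/andP; split; apply/eqP => E; subst u;
    [rewrite uL in yL | rewrite uL in zL].
have /andP[/off/andP[y1 z1] /off/andP[y2 z2]] := mem_endpoints eL.
by rewrite (tpermD y1 z1) (eqP (allP pL e eL)) (tpermD y2 z2).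
Qed.

Lemma card_pairings_with_cons x y L :
  x != y -> x \notin endpoints L -> y \notin endpoints L ->
  ((elln d - (2 * size L).+1) * #|pairings_with ((x, y) :: L)| <= #|pairings_with L|)%N.
Proof.
move=> xy xL yL; set Z := [set z : he | (z != x) && (z \notin endpoints L)].
apply: leq_trans (_ : (\sum_(z in Z) #|[set p in pairings_with L | p x == z]| <= _)%N).
  apply: leq_trans (leq_mul (card_free_half_edges x L) (leqnn _)) _.
  rewrite -sum_nat_const; apply: leq_sum => z; rewrite inE => /andP[zx zL].
  exact: card_pairings_with_cons_le.
rewrite -sum1_card (partition_big (fun p : {perm he} => p x) predT) //=.
rewrite [X in (_ <= X)%N](bigID (mem Z)) /= -[X in (X <= _)%N]addn0.
apply: leq_add; last exact: leq0n.
apply: leq_sum => z _; rewrite -sum1_card.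
by apply: eq_leq; apply: eq_bigl => p; rewrite !inE.
Qed.

Lemma card_pairings_with L : uniq (endpoints L) ->
  (#|pairings_with L| * (elln d - 2 * size L) ^ size L <= #|pairings d|)%N.
Proof.
elim: L => [|[x y] L IH] /=.
  move=> _; rewrite expn0 muln1; apply: subset_leq_card; apply/subsetP => p.
  by rewrite inE => /andP[].
rewrite -/(endpoints L) inE negb_or => /and3P[/andP[xy xL] yL uL].
apply: leq_trans (IH uL).
rewrite expnS mulnA.
apply: leq_mul; last first.
  case: (size L) => [|s] //.
  by rewrite leq_exp2r // leq_sub2l // leq_mul2l ltnW.
rewrite mulnC; apply: leq_trans (card_pairings_with_cons xy xL yL).
by rewrite leq_mul2r leq_sub2l ?orbT // mulnS.
Qed.

Lemma uniq_endpoints_map (A B : nat -> he) (s : seq nat) : uniq s ->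
  {in s &, injective A} -> {in s &, injective B} ->
  (forall i j, i \in s -> j \in s -> A i != B j) ->
  uniq (endpoints [seq (A i, B i) | i <- s]).
Proof.
elim: s => [|i s IH] //= /andP[nis us] iA iB AB.
have memf u : u \in endpoints [seq (A i, B i) | i <- s] ->
    exists2 j, j \in s & (u = A j) \/ (u = B j).
  move=> /flattenP[l] /mapP[e /mapP[j js ->] ->].
  by rewrite !inE => /orP[]/eqP ->; exists j => //; [left|right].
have i0 := mem_head i s.
have nij j : j \in s -> i = j -> False by move=> js E; rewrite E js in nis.
rewrite -/(endpoints _) inE negb_or (AB i i i0 i0) /=.
apply/and3P; split.
- apply/negP => /memf[j js [E|E]].
    by apply: (nij j js); apply: iA => //; rewrite inE js orbT.
  by move: (AB i j i0); rewrite inE js orbT E eqxx => /(_ isT).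
- apply/negP => /memf[j js [E|E]].
    by move: (AB j i); rewrite inE js orbT E eqxx => /(_ isT i0).
  by apply: (nij j js); apply: iB => //; rewrite inE js orbT.
- apply: IH => //.
  + by move=> u v us' vs'; apply: iA; rewrite inE ?us' ?vs' orbT.
  + by move=> u v us' vs'; apply: iB; rewrite inE ?us' ?vs' orbT.
  + by move=> u v us' vs'; apply: AB; rewrite inE ?us' ?vs' orbT.
Qed.

End HalfEdges.

Section Chains.
Variables (n : nat) (d : 'I_n -> nat).
Local Notation he := (half_edge d).

Definition simple_path (p : {perm he}) (c : 'I_n) (m : nat) (pi : nat -> 'I_n) :=
  [/\ pi 0%N = c, forall i, (i < m)%N -> cm_adj p (pi i) (pi i.+1)
    & forall i j, (i <= m)%N -> (j <= m)%N -> pi i = pi j -> i = j].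

Definition chain (p : {perm he}) c m (Q : nat -> pred 'I_n) (F : pred 'I_n) :=
  exists pi, [/\ simple_path p c m pi, forall i, (0 < i < m)%N -> Q i (pi i) & F (pi m)].

Lemma cm_dist_le_simple_path p a b k : a != b -> cm_dist_le p a b k ->
  exists m pi, [/\ (0 < m <= k)%N, simple_path p a m pi & pi m = b].
Proof.
move=> ab /existsP[kk /existsP[s /andP[pth lst]]].
move: ab; rewrite -(eqP lst).
case/shortenP: pth => s' pth' uq sub ab.
have szs : (size s' <= k)%N.
  apply: leq_trans (uniq_leq_size (proj2 (andP uq)) sub) _.
  by rewrite size_tuple -ltnS ltn_ord.
exists (size s'), (fun i => nth a (a :: s') i); split.
- rewrite szs andbT lt0n size_eq0; apply/eqP => E; move: ab; by rewrite E eqxx.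
- split => //.
  + by move=> i im; exact: (pathP a pth' i im).
  + move=> i j im jm E; apply/eqP; rewrite -(nth_uniq a _ _ uq) ?E //= ltnS //.
- by have := nth_last a (a :: s'); rewrite /=.
Qed.

Lemma simple_path_rev p c m pi : p \in pairings d -> simple_path p c m pi ->
  simple_path p (pi m) m (fun i => pi (m - i)%N).
Proof.
move=> pP [p0 adj inj]; split; first by rewrite subn0.
- move=> i im; apply: cm_adj_sym => //.
  have -> : (m - i = (m - i.+1).+1)%N by rewrite subnSK.
  by apply: adj; rewrite ltn_subrL (leq_ltn_trans _ im).
- move=> i j im jm /inj E.
  have := E (leq_subr _ _) (leq_subr _ _); lia.
Qed.

Lemma simple_path_half_edges p c m pi : p \in pairings d -> simple_path p c m.+1 pi ->
  exists H : nat -> he,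
  [/\ forall i, (i < m.+1)%N -> tag (H i) = pi i /\ tag (p (H i)) = pi i.+1,
      {in iota 0 m.+1 &, injective H}
    & forall i j, (i < m.+1)%N -> (j < m.+1)%N -> H i != p (H j)].
Proof.
move=> /pairingP pinv [_ adj inj].
have [h0 _] : exists h : he, true.
  by have /existsP[h _] := adj 0%N isT; exists h.
pose H i := odflt h0 [pick h : he | (tag h == pi i) && (tag (p h) == pi i.+1)].
have HP i : (i < m.+1)%N -> tag (H i) = pi i /\ tag (p (H i)) = pi i.+1.
  move=> im; rewrite /H; case: pickP => [h /andP[/eqP -> /eqP ->] //|none].
  by have /existsP[h hh] := adj i im; rewrite none in hh.
exists H; split => // [i j|i j im jm].
  rewrite !mem_iota !add0n => im jm E.
  apply: inj; [exact: ltnW | exact: ltnW |].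
  by rewrite -(proj1 (HP i im)) -(proj1 (HP j jm)) E.
(* H i = p (H j) would make the path visit pi i twice, or traverse an edge backwards. *)
apply/eqP => E.
have := HP i im; have := HP j jm; rewrite E => -[_ t2] [t1 _].
have ij : i = j.+1 by apply: inj => //; [exact: ltnW| rewrite -t1 t2].
subst i.
have E2 : p (H j.+1) = H j by rewrite E (proj1 (pinv _)).
have := HP j.+1 im; rewrite E2 (proj1 (HP j jm)) => -[_ t3].
by have := inj j j.+2 (ltnW jm) im t3; lia.
Qed.

Section Words.
Variables (m : nat) (c : 'I_n) (Q : nat -> pred 'I_n) (F : pred 'I_n).

(* A word (x_0, f, y_m) with f k = (y_k, x_(k+1)) lists the half-edges used by a chain
   of length m + 1: the pairs (x_i, y_i) are its edges, and y_k, x_(k+1) lie at its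
   (k+1)-st vertex. *)
Definition chain_word := (he * {ffun 'I_m -> he * he} * he)%type.

Definition word_pairs (w : chain_word) : seq (he * he) :=
  zip (w.1.1 :: [seq (w.1.2 k).2 | k <- ord_enum m])
      (rcons [seq (w.1.2 k).1 | k <- ord_enum m] w.2).

Definition inner_pair k (e : he * he) :=
  [&& tag e.1 == tag e.2, e.1 != e.2 & Q k (tag e.1)].

Definition admissible (w : chain_word) :=
  [&& tag w.1.1 == c, [forall k : 'I_m, inner_pair k.+1 (w.1.2 k)] & F (tag w.2)].

Definition realizes (w : chain_word) (p : {perm he}) :=
  [&& admissible w, uniq (endpoints (word_pairs w)) & matches p (word_pairs w)].

Definition chain_event (p : {perm he}) := [exists w, realizes w p].

Lemma size_word_pairs w : size (word_pairs w) = m.+1.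
Proof.
have szE : size (ord_enum m) = m by rewrite -(size_map val) val_ord_enum size_iota.
by rewrite size_zip size_rcons -cat1s size_cat !size_map szE minnn.
Qed.

Lemma word_pairsE (X Y : nat -> he) :
  word_pairs (X 0%N, [ffun k : 'I_m => (Y k, X k.+1)], Y m) =
  [seq (X i, Y i) | i <- iota 0 m.+1].
Proof.
set f := [ffun k : 'I_m => _].
have eX : X 0%N :: [seq (f k).2 | k <- ord_enum m] = map X (iota 0 m.+1).
  transitivity (X 0%N :: map X (iota 1 m)); last by [].
  congr cons; rewrite -(addn0 1) iotaDl -map_comp -val_ord_enum -map_comp.
  by apply: eq_map => k; rewrite /f ffunE.
have eY : rcons [seq (f k).1 | k <- ord_enum m] (Y m) = map Y (iota 0 m.+1).
  rewrite -addn1 iotaD map_cat cats1 -val_ord_enum -map_comp.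
  by congr rcons; apply: eq_map => k; rewrite /f ffunE.
by rewrite /word_pairs eX eY zip_map.
Qed.

Lemma chain_event_of_chain p : p \in pairings d -> chain p c m.+1 Q F -> chain_event p.
Proof.
move=> pP [pi [sp Qi Fm]]; have [p0 _ _] := sp.
have [H [HP H_inj H_out_in]] := simple_path_half_edges pP sp.
apply/existsP; exists (H 0%N, [ffun k : 'I_m => (p (H k), H k.+1)], p (H m)).
rewrite /realizes (word_pairsE H (fun i => p (H i))); apply/and3P; split.
- apply/and3P; split.
  + by rewrite [_.1.1]/= (proj1 (HP 0%N isT)) p0.
  + apply/forallP => k; rewrite [_.1.2]/= ffunE /inner_pair [(_, _).1]/= [(_, _).2]/=.
    have km : (k < m.+1)%N by rewrite ltnW // ltnS.
    have k1m : (k.+1 < m.+1)%N by rewrite ltnS.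
    rewrite (proj2 (HP _ km)) (proj1 (HP _ k1m)) eqxx /=.
    by rewrite eq_sym H_out_in //=; apply: Qi; rewrite ltnS; exact: ltn_ord.
  + by rewrite [_.2]/= (proj2 (HP m (ltnSn _))).
- apply: uniq_endpoints_map => //; first exact: iota_uniq.
  + by move=> i j ii jj /perm_inj; apply: H_inj.
  + by move=> i j; rewrite !mem_iota !add0n; apply: H_out_in.
- by apply/allP => e /mapP[i _ ->] /=.
Qed.

Lemma card_inner_pairs k :
  #|[pred e : he * he | inner_pair k e]| = (\sum_(v | Q k v) d v * (d v).-1)%N.
Proof.
rewrite -sum1_card.
rewrite (_ : \sum_(e in [pred e : he * he | inner_pair k e]) 1 =
   \sum_(u : he) \sum_(w : he | inner_pair k (u, w)) 1)%N; last first.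
  by rewrite pair_big_dep; apply: eq_bigl => -[u w].
rewrite (eq_bigr (fun u : he => if Q k (tag u) then (d (tag u)).-1 else 0%N)); last first.
  move=> u _; rewrite sum1_card /inner_pair /=.
  case: (Q k (tag u)); last first.
    by apply: eq_card0 => w; rewrite unfold_in /= !andbF.
  rewrite -(@card_half_edges_at n d (tag u)) [in RHS](cardD1 u) [in RHS]unfold_in /=.
  rewrite eqxx add1n /=; apply: eq_card => w; rewrite !unfold_in /=.
  by rewrite andbT andbC (eq_sym u) (eq_sym (tag u)).
rewrite (@sum_half_edges n d (fun v => if Q k v then (d v).-1 else 0%N)) [RHS]big_mkcond /=.
by apply: eq_bigr => v _; case: (Q k v); rewrite ?muln0.
Qed.

Lemma card_admissible : #|[pred w : chain_word | admissible w]| =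
  (d c * \prod_(k < m) (\sum_(v | Q k.+1 v) d v * (d v).-1) * \sum_(v | F v) d v)%N.
Proof.
pose P (k : 'I_m) := [pred e : he * he | inner_pair k.+1 e].
have -> : #|[pred w : chain_word | admissible w]| =
    #|[predX [predX [pred h : he | tag h == c] & family P] & [pred h : he | F (tag h)]]|.
  by apply: eq_card => -[[h f] h']; rewrite !inE /admissible /= andbA.
rewrite !cardX card_family card_half_edges_at card_half_edges_in foldrE big_map big_enum.
by congr (_ * _ * _)%N; apply: eq_bigr => k _; rewrite card_inner_pairs.
Qed.

Lemma card_chain_event :
  (#|[set p in pairings d | chain_event p]| * (elln d - 2 * m.+1) ^ m.+1 <=
   d c * \prod_(k < m) (\sum_(v | Q k.+1 v) d v * (d v).-1) * (\sum_(v | F v) d v)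
     * #|pairings d|)%N.
Proof.
apply: leq_trans (leq_mul (card_le_sum_cover (F := realizes) _) (leqnn _)) _.
  by move=> p _ /existsP.
rewrite -card_admissible -[#|[pred w : chain_word | admissible w]|]sum1_card.
rewrite !big_distrl /= [X in (_ <= X)%N]big_mkcond /=.
apply: leq_sum => w _; rewrite mul1n.
case: (boolP (admissible w && uniq (endpoints (word_pairs w)))) => [/andP[aw uw]|bad].
  rewrite inE aw (_ : [set p in pairings d | realizes w p] = pairings_with (word_pairs w)).
    by rewrite -(size_word_pairs w) card_pairings_with.
  by apply/setP => p; rewrite !inE /realizes aw uw.
rewrite (_ : [set p in pairings d | realizes w p] = set0) ?cards0 //.
by apply/setP => p; rewrite !inE /realizes; case/nandP: bad => /negbTE ->; rewrite /= ?andbF.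
Qed.

End Words.
End Chains.

Local Open Scope ring_scope.

Lemma chain_ratio (R : realFieldType) (L m A B : nat) (S : 'I_m -> nat) :
  (2 * m.+1 < L)%N ->
  (A * \prod_(i < m) S i * B)%:R / ((L - 2 * m.+1) ^ m.+1)%:R =
  A%:R * (B%:R / L%:R) *
    ((1 - (2 * m.+1)%:R / L%:R) ^- m.+1 * \prod_(i < m) ((S i)%:R / L%:R) : R).
Proof.
move=> mL.
have L0 : (L%:R : R) != 0 by rewrite pnatr_eq0; lia.
have D0 : ((L - 2 * m.+1)%:R : R) != 0 by rewrite pnatr_eq0; lia.
have -> : 1 - (2 * m.+1)%:R / L%:R = (L - 2 * m.+1)%:R / L%:R :> R.
  by rewrite natrB ?(ltnW mL) // mulrBl divff.
rewrite prodf_div prodr_const card_ord expr_div_n invf_div !natrM natr_prod natrX.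
rewrite !exprS; move: (L%:R ^+ m) (expf_neq0 m L0) => Lm Lm0.
move: ((L - 2 * m.+1)%:R ^+ m) (expf_neq0 m D0) => Dm Dm0.
by field; rewrite Lm0 Dm0 D0 L0.
Qed.

Section DegreeStatistics.
Variables (R : realFieldType) (n : nat) (d : 'I_n -> nat).

Lemma nunE (t : R) :
  nun d t = (\sum_(v | (d v)%:R <= t) d v * (d v).-1)%:R / (elln d)%:R.
Proof. by rewrite /nun natr_sum. Qed.

Lemma subr_Fstar (t : R) : (0 < elln d)%N ->
  1 - Fstar d t = (\sum_(v | ~~ ((d v)%:R <= t)) d v)%:R / (elln d)%:R.
Proof.
move=> l0; have Lne : ((elln d)%:R : R) != 0 by rewrite pnatr_eq0 -lt0n.
rewrite /Fstar -{1}(divff Lne) -mulrBl natr_sum; congr (_ / _).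
by rewrite /elln natr_sum (bigID (fun v => (d v)%:R <= t)) /=; ring.
Qed.


End DegreeStatistics.

Section DegreeTruncation.
Variables (R : realFieldType) (n : nat) (d : 'I_n -> nat) (g : nat -> R).
Hypothesis g_incr : forall l, g l <= g l.+1.
Local Notation he := (half_edge d).

Definition deg_le (i : nat) (v : 'I_n) := (d v)%:R <= g i.
Definition deg_gt (i : nat) (v : 'I_n) := ~~ deg_le i v.
Definition deg_le_min (k i : nat) (v : 'I_n) := (d v)%:R <= Num.min (g i) (g (k - i)%N).

Lemma g_le : {homo g : i j / (i <= j)%N >-> i <= j}.
Proof. exact: homo_leq lexx le_trans g_incr. Qed.

Lemma first_high_degree (p : {perm he}) c m pi l :
  simple_path p c m pi -> deg_le 0 (pi 0%N) -> (l <= m)%N -> deg_gt l (pi l) ->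
  exists j, (0 < j <= l)%N /\ chain p c j deg_le (deg_gt j).
Proof.
move=> [p0 adj inj] low0 lm high_l.
have [j high_j minj] := ex_minnP (ex_intro (fun j => deg_gt j (pi j)) l high_l).
have jl : (j <= l)%N by apply: minj.
have j0 : (0 < j)%N.
  by rewrite lt0n; apply/eqP => j0; move: high_j; rewrite j0 /deg_gt low0.
exists j; split; first by rewrite j0 jl.
exists pi; split => //.
- split => //.
  + by move=> i ij; apply: adj; apply: leq_trans ij (leq_trans jl lm).
  + by move=> i k ij kj; apply: inj; exact: (leq_trans _ (leq_trans jl lm)).
- move=> i /andP[_ ij]; apply/negPn/negP => high_i.
  by have := minj i high_i; rewrite leqNgt ij.
Qed.

(* As g is increasing, a vertex at position l violating d <= g_l /\ g_(k-l) is high for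
   g_(min(l, k-l)), and min(l, k-l) <= kbar is its distance from a or from b. *)
Lemma cm_dist_le_cases (p : {perm he}) a b kbar : p \in pairings d -> a != b ->
  deg_le 0 a -> deg_le 0 b -> cm_dist_le p a b (2 * kbar) ->
  [\/ exists m, (0 < m <= 2 * kbar)%N /\ chain p a m (deg_le_min m) (pred1 b),
      exists j, (0 < j <= kbar)%N /\ chain p a j deg_le (deg_gt j)
    | exists j, (0 < j <= kbar)%N /\ chain p b j deg_le (deg_gt j)].
Proof.
move=> pP ab low_a low_b /(cm_dist_le_simple_path ab)[m [pi [/andP[m0 mk] sp pim]]].
have [p0 _ _] := sp.
case: (boolP [forall l : 'I_m, (0 < l)%N ==> deg_le_min m l (pi l)]) => [/forallP H|].
  apply: Or31; exists m; split; first by rewrite m0 mk.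
  exists pi; split => //; last by rewrite /= pim.
  by move=> i /andP[i0 im]; have := H (Ordinal im); rewrite /= i0.
move=> /forallPn[[l lm]] /=; rewrite negb_imply => /andP[l0].
rewrite /deg_le_min le_min negb_and => H.
case: (leqP (2 * l) m) => hl.
  have high_l : deg_gt l (pi l).
    case/orP: H => // H; apply/negP => D; move/negP: H; apply.
    by apply: le_trans D (g_le _); lia.
  have low0 : deg_le 0 (pi 0%N) by rewrite p0.
  have [j [/andP[j0 jl] ch]] := first_high_degree sp low0 (ltnW lm) high_l.
  by apply: Or32; exists j; split => //; rewrite j0; lia.
have high_l' : deg_gt (m - l) (pi (m - (m - l))%N).
  rewrite (_ : (m - (m - l))%N = l); last by lia.
  case/orP: H => H; apply/negP => D; move/negP: H; apply => //.
  by apply: le_trans D (g_le _); lia.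
have low0 : deg_le 0 (pi (m - 0)%N) by rewrite subn0 pim.
have [j [/andP[j0 jl] ch]] :=
  first_high_degree (simple_path_rev pP sp) low0 (leq_subr _ _) high_l'.
by apply: Or33; exists j; split; [rewrite j0; lia | rewrite -pim].
Qed.

Lemma card_cm_dist_le a b kbar : a != b -> deg_le 0 a -> deg_le 0 b ->
  (#|[set p in pairings d | cm_dist_le p a b (2 * kbar)]| <=
   \sum_(m < 2 * kbar) #|[set p in pairings d | chain_event m a (deg_le_min m.+1) (pred1 b) p]|
   + (\sum_(j < kbar) #|[set p in pairings d | chain_event j a deg_le (deg_gt j.+1) p]|
   + \sum_(j < kbar) #|[set p in pairings d | chain_event j b deg_le (deg_gt j.+1) p]|))%N.
Proof.
move=> ab low_a low_b.
pose F (i : ('I_(2 * kbar) + ('I_kbar + 'I_kbar))%type) (p : {perm he}) :=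
  match i with
  | inl m => chain_event m a (deg_le_min m.+1) (pred1 b) p
  | inr (inl j) => chain_event j a deg_le (deg_gt j.+1) p
  | inr (inr j) => chain_event j b deg_le (deg_gt j.+1) p
  end.
apply: leq_trans (card_le_sum_cover (F := F) _) _; last by rewrite !big_sumType.
move=> p pP E; case: (cm_dist_le_cases pP ab low_a low_b E)
  => -[[|m] [/andP[m0 mk] ch]] //.
- by exists (inl (Ordinal mk)); apply: chain_event_of_chain.
- by exists (inr (inl (Ordinal mk))); apply: chain_event_of_chain.
- by exists (inr (inr (Ordinal mk))); apply: chain_event_of_chain.
Qed.

End DegreeTruncation.

Section ChainBounds.
Variables (R : realFieldType) (n : nat) (d : 'I_n -> nat) (g : nat -> R).
Hypothesis g_incr : forall l, g l <= g l.+1.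
Local Notation he := (half_edge d).
Local Notation ell := (elln d)%:R.
Local Notation deg_le := (deg_le d g).
Local Notation deg_gt := (deg_gt d g).
Local Notation deg_le_min := (deg_le_min d g).

Definition chain_bound m c (Q : nat -> pred 'I_n) (F : pred 'I_n) : R :=
  (d c * \prod_(k < m) (\sum_(v | Q k.+1 v) d v * (d v).-1) * \sum_(v | F v) d v)%:R
  / ((elln d - 2 * m.+1) ^ m.+1)%:R.

Lemma card_chain_event_le m c Q F : (2 * m.+1 < elln d)%N ->
  #|[set p in pairings d | chain_event m c Q F p]|%:R <=
  #|pairings d|%:R * chain_bound m c Q F.
Proof.
move=> mL; rewrite mulrA ler_pdivlMr; last by rewrite ltr0n expn_gt0 subn_gt0 mL.
by rewrite -!natrM ler_nat [(#|pairings d| * _)%N]mulnC card_chain_event.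
Qed.

Lemma cm_prob_dist_le a b kbar : a != b ->
  deg_le 0 a -> deg_le 0 b -> (4 * kbar < elln d)%N ->
  cm_prob R (fun p : {perm he} => cm_dist_le p a b (2 * kbar)) <=
  \sum_(m < 2 * kbar) chain_bound m a (deg_le_min m.+1) (pred1 b) +
  \sum_(j < kbar) (chain_bound j a deg_le (deg_gt j.+1) +
                   chain_bound j b deg_le (deg_gt j.+1)).
Proof.
move=> ab low_a low_b kbar_lt; rewrite /cm_prob.
(* With no pairing at all (e.g. l_n odd), cm_prob is 0 since x / 0 = 0. *)
have [P0|P0] := eqVneq #|pairings d| 0%N.
  rewrite P0 invr0 mulr0; apply: addr_ge0; apply: sumr_ge0 => i _;
    by rewrite ?addr_ge0 ?divr_ge0 ?ler0n.
rewrite ler_pdivrMr ?ltr0n ?lt0n // mulrC.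
have := card_cm_dist_le g_incr kbar ab low_a low_b; rewrite -(ler_nat R) => /le_trans; apply.
rewrite !natrD !natr_sum mulrDr !mulr_sumr -[X in _ + X <= _]big_split /=.
apply: lerD; apply: ler_sum => i _; rewrite ?mulrDr ?lerD //;
  apply: card_chain_event_le; have := ltn_ord i; lia.
Qed.

Lemma chain_bound_pred1E a b m : (2 * m.+1 < elln d)%N ->
  chain_bound m a (deg_le_min m.+1) (pred1 b) =
  (d a * d b)%:R / ell * ((1 - (2 * m.+1)%:R / ell) ^- m.+1 *
    \prod_(1 <= l < m.+1) nun d (Num.min (g l) (g (m.+1 - l)%N))).
Proof.
move=> mL; rewrite /chain_bound chain_ratio // (big_pred1 b) // big_add1 big_mkord.
congr (_ * (_ * _)); first by rewrite natrM mulrA.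
by apply: eq_bigr => i _; rewrite nunE.
Qed.

Lemma chain_bound_deg_gtE c j : (2 * j.+1 < elln d)%N ->
  chain_bound j c deg_le (deg_gt j.+1) =
  (d c)%:R * ((1 - (2 * j.+1)%:R / ell) ^- j.+1 * (1 - Fstar d (g j.+1)) *
    \prod_(1 <= l < j.+1) nun d (g l)).
Proof.
move=> jL; rewrite /chain_bound /deg_gt /deg_le chain_ratio // subr_Fstar; last by lia.
rewrite big_add1 big_mkord.
under [X in _ = _ * (_ * X)]eq_bigr => i _ do rewrite nunE.
ring.
Qed.

End ChainBounds.

Unset Implicit Arguments.

Theorem proposition3p7 (R : realFieldType) (n : nat) (d : 'I_n -> nat)
    (g : nat -> R) (a b : 'I_n) (kbar : nat) :
  ~~ odd (elln d) ->
  (forall l, g l <= g l.+1) ->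
  a != b ->
  (d a)%:R <= g 0%N -> (d b)%:R <= g 0%N ->
  (0 < kbar)%N ->
  (4 * kbar < elln d)%N ->
  cm_prob R (fun p : {perm half_edge d} => cm_dist_le p a b (2 * kbar)) <=
    ((d a * d b)%:R / (elln d)%:R) *
      \sum_(1 <= k < (2 * kbar).+1)
         ((1 - (2 * k)%:R / (elln d)%:R) ^- k *
          \prod_(1 <= l < k) nun d (Num.min (g l) (g (k - l)%N)))
    + (d a + d b)%:R *
      \sum_(1 <= k < kbar.+1)
         ((1 - (2 * k)%:R / (elln d)%:R) ^- k * (1 - Fstar d (g k)) *
          \prod_(1 <= l < k) nun d (g l)).
Proof.
move=> _ g_incr ab low_a low_b _ kbar_lt.
apply: le_trans (cm_prob_dist_le g_incr ab low_a low_b kbar_lt) _.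
rewrite le_eqVlt; apply/orP; left; apply/eqP.
congr (_ + _); rewrite big_add1 big_mkord mulr_sumr; apply: eq_bigr => i _.
  by rewrite chain_bound_pred1E //; have := ltn_ord i; lia.
rewrite !chain_bound_deg_gtE ?natrD ?mulrDl //; have := ltn_ord i; lia.
Qed.
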